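(* Let $\mathcal{D}=(\mathcal{P},\mathcal{B},\mathcal{I})$ be a quasi-symmetric $(v,b,r,k,\lambda_1,0)$ SPBIBD of type $(k-1,t)$ with intersection numbers $x=0$ and $y>0$. Then for every block $B\in\mathcal{B}$ there exist blocks $B_1,B_2\in\mathcal{B}$, distinct from $B$, such that $|B\cap B_1|=0$ and $|B\cap B_2|=y$.
   Context: A design $\mathcal{D}=(\mathcal{P},\mathcal{B},\mathcal{I})$ is an incidence structure with $|\mathcal{P}|=v$, $|\mathcal{B}|=b$, every block incident with exactly $k$ points and every point with exactly $r$ blocks; standing assumptions: $v>k$ and $r<b$. For blocks, $B\cap B'$ denotes the set of points incident with both. $(p,B)$ is a flag if $p\in B$, a non-flag otherwise. $\mathcal{D}$ is a $(v,b,r,k,\lambda_1,\lambda_2)$ SPBIBD of type $(s,t)$ if (i) any two distinct points are together in exactly $\lambda_1$ or exactly $\lambda_2$ blocks; (ii) for every flag $(p,B)$, the number of points of $B$ other than $p$ lying with $p$ in exactly $\lambda_1$ blocks is $s$; (iii) for every non-flag $(p,B)$, the number of points of $B$ lying with $p$ in exactly $\lambda_1$ blocks is $t$. $\mathcal{D}$ is quasi-symmetric with intersection numbers $x<y$ if any two distinct blocks share exactly $x$ or $y$ points and both values occur. *)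

From mathcomp Require Import all_boot.
Set Implicit Arguments. Unset Strict Implicit. Unset Printing Implicit Defensive.

(* An incidence structure: finite types of points P and blocks Bk (blocks are
   labels, so repeated blocks are allowed), and an incidence relation. *)
Section Design.
Variables (P Bk : finType) (I : P -> Bk -> bool).

Definition binter (B B' : Bk) : {set P} := [set p | I p B && I p B'].

Definition lam (p q : P) : nat := #|[set B | I p B && I q B]|.

Definition is_design (v b r k : nat) : Prop :=
  [/\ #|P| = v, #|Bk| = b,
      (forall B : Bk, #|[set p | I p B]| = k),
      (forall p : P, #|[set B | I p B]| = r)
    & (k < v) && (r < b)].

Definition is_SPBIBD (v b r k l1 l2 s t : nat) : Prop :=
  [/\ is_design v b r k,
      (forall p q : P, p != q -> lam p q = l1 \/ lam p q = l2),
      (forall (p : P) (B : Bk), I p B ->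
          #|[set q | [&& q != p, I q B & lam p q == l1]]| = s)
    & (forall (p : P) (B : Bk), ~~ I p B ->
          #|[set q | I q B && (lam p q == l1)]| = t)].

Definition quasi_symmetric (x y : nat) : Prop :=
  [/\ x < y,
      (forall B B' : Bk, B != B' -> #|binter B B'| = x \/ #|binter B B'| = y),
      (exists B B' : Bk, B != B' /\ #|binter B B'| = x)
    & (exists B B' : Bk, B != B' /\ #|binter B B'| = y)].
End Design.

(* Double counting the flags (p, C) with p in B and C <> B shows that the
   intersection sizes |B ∩ C| (C <> B) sum to k(r-1) for every block B.  As
   these sizes are 0 or y > 0, the number of blocks meeting B is k(r-1)/y, so
   both the number of blocks meeting B and the number of blocks disjoint from B
   are independent of B.  Quasi-symmetry provides one block having a disjoint
   block and one block having a block that meets it; hence every block has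
   both. *)

From mathcomp Require Import all_boot.

Set Implicit Arguments.
Unset Strict Implicit.
Unset Printing Implicit Defensive.

Lemma sum_nat_two_valued (T : finType) (A : pred T) (F : T -> nat) (y : nat) :
  (forall i, A i -> F i = 0 \/ F i = y) ->
  \sum_(i | A i) F i = y * #|[set i | A i && (F i != 0)]|.
Proof.
move=> F01y; rewrite mulnC -sum_nat_cond_const (bigID (fun i => F i != 0)) /=.
rewrite [X in _ + X]big1 ?addn0 => [|i /andP[_]]; last by rewrite negbK => /eqP.
by apply: eq_bigr => i /andP[/F01y[->|->]].
Qed.

Section QuasiSymmetricDesign.

Variables (P Bk : finType) (I : P -> Bk -> bool) (r k : nat).
Hypothesis block_size : forall B : Bk, #|[set p | I p B]| = k.
Hypothesis replication : forall p : P, #|[set B | I p B]| = r.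

Lemma sum_card_binter (B : Bk) :
  \sum_(C | C != B) #|binter I B C| = k * (r - 1).
Proof.
under eq_bigr do rewrite /binter -sum1dep_card.
rewrite (exchange_big_dep (fun p => I p B)) => [|C p _ /andP[] //].
rewrite -(block_size B) -sum_nat_cond_const.
apply: eq_bigr => p pB; rewrite sum1dep_card -(replication p).
rewrite (cardsD1 B [set C | I p C]) inE pB add1n subn1 /=.
by apply: eq_card => C; rewrite !inE.
Qed.

Variable y : nat.
Hypothesis y_gt0 : 0 < y.
Hypothesis card_binter : forall B C : Bk, B != C ->
  #|binter I B C| = 0 \/ #|binter I B C| = y.

Definition meeting_blocks (B : Bk) : {set Bk} :=
  [set C | (C != B) && (#|binter I B C| != 0)].

Definition disjoint_blocks (B : Bk) : {set Bk} :=
  [set C | (C != B) && (#|binter I B C| == 0)].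

Lemma card_meeting_blocks (B : Bk) : y * #|meeting_blocks B| = k * (r - 1).
Proof.
rewrite -(sum_card_binter B) (sum_nat_two_valued (y := y)) // => C CB.
by apply: card_binter; rewrite eq_sym.
Qed.

Lemma card_meeting_blocks_const (B C : Bk) :
  #|meeting_blocks B| = #|meeting_blocks C|.
Proof. by apply/eqP; rewrite -(eqn_pmul2l y_gt0) !card_meeting_blocks. Qed.

Lemma card_meeting_disjoint_blocks (B : Bk) :
  #|meeting_blocks B| + #|disjoint_blocks B| = #|Bk|.-1.
Proof.
rewrite -(cardsC1 B) -(cardsID [set C | #|binter I B C| != 0] [set~ B]).
by congr (_ + _); apply: eq_card => C; rewrite !inE ?negbK andbC.
Qed.

Lemma card_disjoint_blocks_const (B C : Bk) :
  #|disjoint_blocks B| = #|disjoint_blocks C|.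
Proof.
apply/eqP; rewrite -(eqn_add2l #|meeting_blocks B|) card_meeting_disjoint_blocks.
by rewrite (card_meeting_blocks_const B C) card_meeting_disjoint_blocks.
Qed.

End QuasiSymmetricDesign.

Theorem lemma4p3 (P Bk : finType) (I : P -> Bk -> bool)
    (v b r k l1 t y : nat) :
  is_SPBIBD I v b r k l1 0 (k - 1) t ->
  quasi_symmetric I 0 y ->
  0 < y ->
  forall B : Bk, exists B1 B2 : Bk,
    [/\ B1 != B, B2 != B, #|binter I B B1| = 0 & #|binter I B B2| = y].
Proof.
move=> [[_ _ block_size replication _] _ _ _].
move=> [_ card_binter [B0 [B1 [B01 disj01]]] [C0 [C1 [C01 meet01]]]] y_gt0 B.
have /card_gt0P[D1] : 0 < #|disjoint_blocks I B|.
  rewrite (card_disjoint_blocks_const block_size replication y_gt0 card_binter B B0).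
  by apply/card_gt0P; exists B1; rewrite inE eq_sym B01 disj01.
have /card_gt0P[D2] : 0 < #|meeting_blocks I B|.
  rewrite (card_meeting_blocks_const block_size replication y_gt0 card_binter B C0).
  by apply/card_gt0P; exists C1; rewrite inE eq_sym C01 meet01 -lt0n.
rewrite !inE => /andP[D2B meetD2] /andP[D1B /eqP disjD1].
exists D1, D2; split=> //.
have BD2 : B != D2 by rewrite eq_sym.
by case: (card_binter _ _ BD2) => // /eqP; rewrite (negbTE meetD2).
Qed.
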